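(* Let $n\ge0$ and run the Tiden–Arnborg algorithm on $\sigma(n)$, performing sum transformations level by level. The sum transformations at level $k$ create a peak at $x_{1^k}$ (a node of level $k+1$), provided level $k+1$ is not the lowest level $n+3$.
   Context: Variables are $T$, $x_s$, $y_s$ with $s$ a string over $\{1,2\}$ ($x=x_\varepsilon$, $y=y_\varepsilon$); the level of $x_s$ or $y_s$ is $|s|+1$. For $n\ge0$, $\sigma(n)$ consists of, for all $0\le i\le n$: $x_{1^i}=^?x_{1^{i+1}}+x_{1^i2}$, $y_{2^i}=^?y_{2^i1}+y_{2^{i+1}}$, $y_{2^i1}=^?T\times x_{1^i2}$, $x=^?T\times y$, $x_{1^{i+1}}=^?x_{1^{i+2}}+x_{1^{i+1}2}$; its variables occupy levels $1,\dots,n+3$. A variable $U_i$ ($U\in\{x,y\}$) is a peak if the current system contains both $U_i=^?U_{i1}+U_{i2}$ and $U_i=^?T\times W_j$ for some $W_j$. A sum transformation at a peak $U_i$ replaces $U_i=^?U_{i1}+U_{i2}$ by $W_j=^?W_{j1}+W_{j2}$, $U_{i1}=^?T\times W_{j1}$, $U_{i2}=^?T\times W_{j2}$ (keeping $U_i=^?T\times W_j$), with $W_{j1},W_{j2}$ identified with the existing children of $W_j$ if $W_j$ already has a sum equation. The Tiden–Arnborg algorithm (for $x\times(y+z)=x\times y+x\times z$) applies sum transformations as long as possible; here all sum transformations at one level are completed before those at the next level. *)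

From Stdlib Require Import List Relations Arith.
Import ListNotations.

Inductive letter : Type := L1 | L2.

Inductive var : Type :=
  | VT : var
  | X : list letter -> var
  | Y : list letter -> var.

(* Level of x_s or y_s is |s|+1 (T is given level 0; it never is a peak). *)
Definition level (v : var) : nat :=
  match v with
  | VT => 0
  | X s => S (length s)
  | Y s => S (length s)
  end.

(* The child U_{s c} of U_s (fresh-name convention). *)
Definition child (v : var) (c : letter) : var :=
  match v with
  | VT => VT
  | X s => X (s ++ [c])
  | Y s => Y (s ++ [c])
  end.

(* Equations:  ESum u v w  is  u =? v + w ;  EProd u a w  is  u =? a × w. *)
Inductive eqn : Type :=
  | ESum : var -> var -> var -> eqn
  | EProd : var -> var -> var -> eqn.

Definition system := eqn -> Prop.

Definition sigma (n : nat) : system := fun e =>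
  exists i, i <= n /\
   (e = ESum (X (repeat L1 i)) (X (repeat L1 (S i))) (X (repeat L1 i ++ [L2]))
 \/ e = ESum (Y (repeat L2 i)) (Y (repeat L2 i ++ [L1])) (Y (repeat L2 (S i)))
 \/ e = EProd (Y (repeat L2 i ++ [L1])) VT (X (repeat L1 i ++ [L2]))
 \/ e = EProd (X []) VT (Y [])
 \/ e = ESum (X (repeat L1 (S i))) (X (repeat L1 (S (S i))))
             (X (repeat L1 (S i) ++ [L2]))).

Definition is_peak (S : system) (u : var) : Prop :=
  (exists v1 v2, S (ESum u v1 v2)) /\ (exists w, S (EProd u VT w)).

Definition sum_transf (u : var) (S S' : system) : Prop :=
  exists v1 v2 w w1 w2,
    S (ESum u v1 v2) /\ S (EProd u VT w) /\
    ((S (ESum w w1 w2)) \/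
     ((forall a b, ~ S (ESum w a b)) /\ w1 = child w L1 /\ w2 = child w L2)) /\
    (forall e, S' e <->
       ((S e /\ e <> ESum u v1 v2) \/ e = ESum w w1 w2 \/
        e = EProd v1 VT w1 \/ e = EProd v2 VT w2)).

Definition step_at_level (k : nat) (S S' : system) : Prop :=
  exists u, level u = k /\ sum_transf u S S'.

Definition phase (k : nat) (S S' : system) : Prop :=
  clos_refl_trans system (step_at_level k) S S' /\
  (forall u, level u = k -> ~ is_peak S' u).

Inductive run (n : nat) : nat -> system -> Prop :=
  | run0 : run n 0 (sigma n)
  | runS : forall k Q Q', run n k Q -> phase (S k) Q Q' -> run n (S k) Q'.

From Stdlib Require Import List Arith Lia Relations Classical.
Import ListNotations.

(* A sum transformation at level k only removes a sum equation at level k and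
   only adds product equations at level k + 1.  Hence, after the phases for
   levels 1, ..., k - 1, the sum equation of sigma(n) at x_{1^k} is still
   present while no product equation has its left-hand side at level k + 1,
   so x_{1^k} is not a peak.  On the other hand x_{1^j} carries a product
   equation after phase j: for j = 0 this is x = T * y, and since phase j + 1
   ends without a peak at x_{1^j}, its sum equation
   x_{1^j} = x_{1^(j+1)} + x_{1^j 2} must have been transformed, which puts a
   product equation on x_{1^(j+1)}. *)

Definition wf_system (Q : system) : Prop :=
  (forall u a b, Q (ESum u a b) ->
     level a = Datatypes.S (level u) /\ level b = Datatypes.S (level u)) /\
  (forall u w, Q (EProd u VT w) -> w <> VT).

Lemma clos_rt_invariant (A : Type) (R : relation A) (P : A -> Prop) x y :
  (forall a b, R a b -> P a -> P b) -> clos_refl_trans A R x y -> P x -> P y.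
Proof. intros HR Hxy; induction Hxy; eauto. Qed.

Lemma level_X_repeat j : level (X (repeat L1 j)) = Datatypes.S j.
Proof. simpl; rewrite repeat_length; reflexivity. Qed.

Lemma level_child v c : v <> VT -> level (child v c) = Datatypes.S (level v).
Proof.
  destruct v; simpl; intros Hv; [congruence| |];
    rewrite length_app; simpl; lia.
Qed.

Section SumTransformation.

Variables (u : var) (Q Q' : system).
Hypothesis Htr : sum_transf u Q Q'.

Lemma sum_transf_keeps_sum x a b : Q (ESum x a b) -> x <> u -> Q' (ESum x a b).
Proof.
  destruct Htr as (v1 & v2 & w & w1 & w2 & _ & _ & _ & HQ').
  intros Hx Hxu; apply HQ'; left; split; [exact Hx|congruence].
Qed.

Lemma sum_transf_keeps_prod x a w : Q (EProd x a w) -> Q' (EProd x a w).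
Proof.
  destruct Htr as (v1 & v2 & w' & w1 & w2 & _ & _ & _ & HQ').
  intros Hx; apply HQ'; left; split; [exact Hx|discriminate].
Qed.

Lemma sum_transf_wf : wf_system Q -> wf_system Q'.
Proof.
  destruct Htr as (v1 & v2 & w & w1 & w2 & Hs & Hp & Hw & HQ').
  intros [Hsum Hprod].
  assert (HwT : w <> VT) by exact (Hprod _ _ Hp).
  assert (Hw12 : level w1 = Datatypes.S (level w) /\ level w2 = Datatypes.S (level w)).
  { destruct Hw as [Hw | (_ & -> & ->)]; [exact (Hsum _ _ _ Hw)|].
    split; apply level_child; exact HwT. }
  destruct (Hsum _ _ _ Hs) as [Hv1 Hv2].
  split.
  - intros x a b Hx; apply HQ' in Hx.
    destruct Hx as [[Hx _] | [E | [E | E]]]; try discriminate; [eauto|].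
    injection E as -> -> ->; exact Hw12.
  - intros x z Hx; apply HQ' in Hx.
    destruct Hx as [[Hx _] | [E | [E | E]]]; try discriminate; [eauto| |];
      injection E as -> ->; intros ->; simpl in Hw12; lia.
Qed.

Lemma sum_transf_new_prod : wf_system Q ->
  forall x w, Q' (EProd x VT w) -> Q (EProd x VT w) \/ level x = Datatypes.S (level u).
Proof.
  destruct Htr as (v1 & v2 & w & w1 & w2 & Hs & _ & _ & HQ').
  intros [Hsum _] x z Hx; apply HQ' in Hx.
  destruct (Hsum _ _ _ Hs) as [Hv1 Hv2].
  destruct Hx as [[Hx _] | [E | [E | E]]]; try discriminate; [now left| |];
    injection E as -> _; now right.
Qed.

Lemma sum_transf_sum_or_prod x a b :
  Q (ESum x a b) -> Q' (ESum x a b) \/ exists w, Q' (EProd a VT w).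
Proof.
  destruct Htr as (v1 & v2 & w & w1 & w2 & _ & _ & _ & HQ').
  intros Hx.
  destruct (classic (ESum x a b = ESum u v1 v2)) as [E | Hne].
  - injection E as -> -> ->; right; exists w1; apply HQ'; auto.
  - left; apply HQ'; auto.
Qed.

End SumTransformation.

Lemma phase_prod_child k x a b w Q Q' :
  level x = k -> Q (EProd x VT w) -> Q (ESum x a b) -> phase k Q Q' ->
  exists w', Q' (EProd a VT w').
Proof.
  intros Hx Hp Hs [Hsteps Hnopeak].
  assert (Hend : (exists w, Q' (EProd x VT w)) /\
                 (Q' (ESum x a b) \/ exists w, Q' (EProd a VT w))).
  { pattern Q'; apply (clos_rt_invariant _ _ _ Q Q') with (2 := Hsteps); [|eauto].
    intros A B (v & _ & Ht) [[w0 Hw0] Hab]; split.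
    - exists w0; exact (sum_transf_keeps_prod _ _ _ Ht _ _ _ Hw0).
    - destruct Hab as [Hab | [w1 Hw1]].
      + exact (sum_transf_sum_or_prod _ _ _ Ht _ _ _ Hab).
      + right; exists w1; exact (sum_transf_keeps_prod _ _ _ Ht _ _ _ Hw1). }
  destruct Hend as [Hxp [Hab | Ha]]; [|exact Ha].
  exfalso; apply (Hnopeak x Hx); split; eauto.
Qed.

Lemma sigma_wf n : wf_system (sigma n).
Proof.
  split.
  - intros u a b (i & _ & H).
    destruct H as [E | [E | [E | [E | E]]]]; try discriminate;
      injection E as -> -> ->; simpl;
      rewrite ?length_app, ?repeat_length; simpl; split; lia.
  - intros u w (i & _ & H).
    destruct H as [E | [E | [E | [E | E]]]]; try discriminate;
      injection E as -> ->; discriminate.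
Qed.

Lemma sigma_prod_X n s w : sigma n (EProd (X s) VT w) -> s = [].
Proof.
  intros (i & _ & H).
  destruct H as [E | [E | [E | [E | E]]]]; try discriminate; now injection E.
Qed.

Lemma sigma_spine_sum n i : i <= n + 1 ->
  sigma n (ESum (X (repeat L1 i)) (X (repeat L1 (Datatypes.S i))) (X (repeat L1 i ++ [L2]))).
Proof.
  intros Hi.
  destruct (Nat.le_gt_cases i n) as [Hin | Hin].
  - exists i; split; [exact Hin|now left].
  - replace i with (Datatypes.S n) by lia.
    exists n; split; [reflexivity|now do 4 right].
Qed.

Definition prods_bounded (n j : nat) (Q : system) : Prop :=
  forall x w, Q (EProd x VT w) -> sigma n (EProd x VT w) \/ level x <= Datatypes.S j.

Lemma run_wf_prods_bounded n j Q : run n j Q -> wf_system Q /\ prods_bounded n j Q.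
Proof.
  induction 1 as [|k Q Q' _ IH [Hsteps _]].
  - split; [apply sigma_wf|now left].
  - pattern Q'; apply (clos_rt_invariant _ _ _ Q Q') with (2 := Hsteps).
    + intros A B (u & Hu & Ht) [Hwf Hb]; split; [exact (sum_transf_wf _ _ _ Ht Hwf)|].
      intros x w Hx.
      destruct (sum_transf_new_prod _ _ _ Ht Hwf _ _ Hx) as [HA | Hl]; [|lia].
      destruct (Hb _ _ HA); auto.
    + destruct IH as [Hwf Hb]; split; [exact Hwf|].
      intros x w Hx; destruct (Hb _ _ Hx); auto.
Qed.

Lemma run_keeps_sigma_sum n j Q x a b :
  run n j Q -> sigma n (ESum x a b) -> j < level x -> Q (ESum x a b).
Proof.
  intros Hrun Hs; induction Hrun as [|k Q Q' _ IH [Hsteps _]]; intros Hx; [exact Hs|].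
  pattern Q'; apply (clos_rt_invariant _ _ _ Q Q') with (2 := Hsteps); [|apply IH; lia].
  intros A B (u & Hu & Ht) HA.
  apply (sum_transf_keeps_sum _ _ _ Ht _ _ _ HA); intros ->; lia.
Qed.

Lemma run_spine_prod n j Q :
  run n j Q -> j <= n + 1 -> exists w, Q (EProd (X (repeat L1 j)) VT w).
Proof.
  induction 1 as [|k Q Q' Hrun IH Hphase]; intros Hj.
  - exists (Y []), 0; split; [lia|now do 3 right; left].
  - destruct IH as [w Hw]; [lia|].
    apply (phase_prod_child (Datatypes.S k) (X (repeat L1 k)) _ (X (repeat L1 k ++ [L2])) w Q);
      [apply level_X_repeat|exact Hw| |exact Hphase].
    apply (run_keeps_sigma_sum n k); [exact Hrun|apply sigma_spine_sum; lia|].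
    rewrite level_X_repeat; lia.
Qed.

Theorem lemma1 : forall (n k : nat) (S0 S1 : system),
  1 <= k -> k + 1 < n + 3 ->
  run n (k - 1) S0 -> phase k S0 S1 ->
  ~ is_peak S0 (X (repeat L1 k)) /\ is_peak S1 (X (repeat L1 k)).
Proof.
  intros n k S0 S1 Hk Hkn Hrun0 Hphase.
  destruct k as [|j]; [lia|].
  rewrite Nat.sub_1_r in Hrun0; simpl in Hrun0.
  assert (Hrun1 : run n (Datatypes.S j) S1) by (econstructor; eauto).
  split.
  - intros [_ [w Hw]].
    destruct (proj2 (run_wf_prods_bounded _ _ _ Hrun0) _ _ Hw) as [Hs | Hl].
    + discriminate (sigma_prod_X _ _ _ Hs).
    + rewrite level_X_repeat in Hl; lia.
  - split; [|apply (run_spine_prod n); [exact Hrun1|lia]].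
    do 2 eexists; apply (run_keeps_sigma_sum n (Datatypes.S j) S1);
      [exact Hrun1|apply sigma_spine_sum; lia|rewrite level_X_repeat; lia].
Qed.
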